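(* Let $h\ge2$ and $1\le r\le m\le n$. The core of $\mathrm{Bil}_r(\mathbb{Z}_h^{m\times n})$ is a maximum clique (a complete graph on $h^{nr}$ vertices), and $\mathrm{Bil}_r(\mathbb{Z}_h^{m\times n})$ is itself a core if and only if $r=m$.
   Context: $\mathbb{Z}_h$ is the residue class ring modulo $h$. The inner rank $\rho(A)$ of a nonzero $A\in\mathbb{Z}_h^{m\times n}$ is the least $r$ with $A=BC$, $B\in\mathbb{Z}_h^{m\times r}$, $C\in\mathbb{Z}_h^{r\times n}$; $\rho(0)=0$. $\mathrm{Bil}_r(\mathbb{Z}_h^{m\times n})$ is the graph on $\mathbb{Z}_h^{m\times n}$, distinct $A,B$ adjacent iff $\rho(A-B)\le r$. A graph is a core if every endomorphism (homomorphism to itself) is an automorphism; a core of a graph $\Gamma$ is a subgraph $\Delta$ that is a core and admits a homomorphism $\Gamma\to\Delta$ (unique up to isomorphism). *)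

From HB Require Import structures.
From mathcomp Require Import all_boot all_order all_algebra.
Set Implicit Arguments. Unset Strict Implicit. Unset Printing Implicit Defensive.
Import GRing.Theory.
Local Open Scope ring_scope.

Definition ghom (T U : Type) (eT : rel T) (eU : rel U) (f : T -> U) : Prop :=
  forall x y, eT x y -> eU (f x) (f y).

Definition gauto (T : Type) (e : rel T) (f : T -> T) : Prop :=
  bijective f /\ forall x y, e x y = e (f x) (f y).

Definition is_core (T : finType) (e : rel T) : Prop :=
  forall f : T -> T, ghom e e f -> gauto e f.

Definition subgraph_rel (T : finType) (S : {set T}) (eD : rel T)
  : rel {x : T | x \in S} := fun u v => eD (val u) (val v).

Definition is_core_of (T : finType) (e : rel T) (S : {set T}) (eD : rel T) : Prop :=
  (forall x y, x \in S -> y \in S -> eD x y -> e x y) /\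
  is_core (@subgraph_rel T S eD) /\
  exists f : T -> {x : T | x \in S}, ghom e (@subgraph_rel T S eD) f.

Definition clique (T : finType) (e : rel T) (S : {set T}) : Prop :=
  forall x y, x \in S -> y \in S -> x != y -> e x y.

Definition max_clique (T : finType) (e : rel T) (S : {set T}) : Prop :=
  clique e S /\ forall S' : {set T}, clique e S' -> (#|S'| <= #|S|)%N.

Definition factors_through (R : finComUnitRingType) (m n : nat) (A : 'M[R]_(m, n)) (k : nat) : bool :=
  [exists B : 'M[R]_(m, k), exists C : 'M[R]_(k, n), A == B *m C].

Lemma factors_through_m (R : finComUnitRingType) (m n : nat) (A : 'M[R]_(m, n)) :
  exists k, factors_through A k.
Proof.
exists m; apply/existsP; exists 1%:M; apply/existsP; exists A.
by rewrite mul1mx.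
Qed.

(* inner rank: least k such that A = B C with B : m x k, C : k x n
   (this gives 0 for the zero matrix, matching rho(0) = 0) *)
Definition inner_rank (R : finComUnitRingType) (m n : nat) (A : 'M[R]_(m, n)) : nat :=
  ex_minn (factors_through_m A).

Definition Bil_adj (h m n r : nat) : rel 'M['Z_h]_(m, n) :=
  fun A B => (A != B) && (inner_rank (A - B) <= r)%N.
Arguments Bil_adj h m n r : clear implicits.

(* The matrices supported on the first r rows form a clique S of h^(nr)
   vertices, since the difference of two of them factors through r.  The heart
   of the proof is a Z_h-linear map with values in S that vanishes on no nonzero
   matrix of inner rank at most r: it is a proper colouring of Bil_r by S, i.e.
   a retraction onto the complete graph S, which is therefore a core of Bil_r
   and a maximum clique; for r < m the graph has more than #|S| vertices and is
   not a core, while for r = m it is complete.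
   The map has integer coefficients and reduces, modulo each prime p dividing h,
   to a Gabidulin map over F_p, built from F_(p^n) and Moore matrices.  A nonzero
   matrix D over Z_h of inner rank at most r has a nonzero multiple (h/p) E,
   where E reduced mod p is nonzero and, by the Smith normal form over Z, of rank
   at most r; so the map cannot vanish on D. *)

From HB Require Import structures.
From mathcomp Require Import all_boot all_algebra all_field.
Set Implicit Arguments. Unset Strict Implicit. Unset Printing Implicit Defensive.
Import GRing.Theory.
Import VectorInternalTheory.
Local Open Scope ring_scope.

Lemma mul_pid_mxE (R : pzSemiRingType) m n r (A : 'M[R]_(m, n)) i j :
  ((pid_mx r : 'M_m) *m A) i j = if (i < r)%N then A i j else 0.
Proof.
rewrite mxE (bigD1 i) //= big1 ?addr0 => [|l /negbTE li]; last first.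
  by rewrite mxE (inj_eq val_inj) eq_sym li mul0r.
by rewrite mxE eqxx /=; case: ifP; rewrite ?mul1r ?mul0r.
Qed.

Section MooreMatrix.
Variables (p : nat) (F : finFieldType) (charFp : p \in [pchar F]).
Local Notation L := (pPrimeCharType charFp).
Let p_prime : prime p := pcharf_prime charFp.

Lemma frobeniusX_sum k (I : Type) (s : seq I) (P : pred I) (f : I -> L) :
  (\sum_(i <- s | P i) f i) ^+ (p ^ k) = \sum_(i <- s | P i) f i ^+ (p ^ k).
Proof.
have frobD (x y : L) : (x + y) ^+ (p ^ k) = x ^+ (p ^ k) + y ^+ (p ^ k).
  by apply: exprDn_pchar; rewrite pnatX (pnatE _ p_prime) charFp.
have frob0 : (0 : L) ^+ (p ^ k) = 0 by rewrite expr0n expn_eq0 (gtn_eqF (prime_gt0 p_prime)).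
exact: (big_morph _ frobD frob0).
Qed.

Lemma frobeniusX_scale k (a : 'F_p) (x : L) : (a *: x) ^+ (p ^ k) = a *: x ^+ (p ^ k).
Proof.
rewrite exprZn; congr (_ *: _); elim: k => [|k IHk]; first by rewrite expr1.
by rewrite expnSr exprM IHk; have := expf_card a; rewrite card_Fp.
Qed.

Definition moore_mx t (u : t.-tuple L) : 'M[L]_t := \matrix_(l, k) u`_l ^+ (p ^ k).

Definition linearized_poly t (d : 'rV[L]_t) : {poly L} := \sum_(k < t) d 0 k *: 'X^(p ^ k).

Lemma coef_linearized_poly t (d : 'rV[L]_t) (k : 'I_t) :
  (linearized_poly d)`_(p ^ k) = d 0 k.
Proof.
rewrite coef_sum (bigD1 k) //= coefZ coefXn eqxx mulr1 big1 ?addr0 // => j jk.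
by rewrite coefZ coefXn eqn_exp2l ?prime_gt1 // (inj_eq val_inj) eq_sym (negbTE jk) mulr0.
Qed.

Lemma linearized_poly_eq0 t (d : 'rV[L]_t) : (linearized_poly d == 0) = (d == 0).
Proof.
apply/eqP/eqP => [d0 | ->]; last by rewrite /linearized_poly big1 // => k _; rewrite mxE scale0r.
by apply/rowP => k; rewrite -coef_linearized_poly d0 coef0 mxE.
Qed.

Lemma size_linearized_poly t (d : 'rV[L]_t.+1) :
  (size (linearized_poly d) <= (p ^ t).+1)%N.
Proof.
apply/leq_sizeP => j ltj; rewrite coef_sum big1 // => k _.
rewrite coefZ coefXn; case: eqP => [jk|]; last by rewrite mulr0.
by move: ltj; rewrite jk ltn_exp2l ?prime_gt1 // ltnNge -ltnS ltn_ord.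
Qed.

Lemma horner_linearized_poly_span t n (d : 'rV[L]_t) (u : n.-tuple L) z :
  z \in <<u>>%VS ->
  (linearized_poly d).[z] = \sum_i coord u i z *: (linearized_poly d).[u`_i].
Proof.
move=> zu; rewrite {1}(coord_span zu) /linearized_poly !horner_sum.
under eq_bigr do rewrite hornerZ hornerXn frobeniusX_sum mulr_sumr.
rewrite exchange_big /=; apply: eq_bigr => i _; rewrite horner_sum scaler_sumr.
by apply: eq_bigr => k _; rewrite hornerZ hornerXn frobeniusX_scale scalerAr.
Qed.

(* A vector in the left kernel would give a nonzero linearized polynomial of
   degree at most p^(t-1) vanishing on the p^t elements of the span of u. *)
Lemma det_moore_mx_neq0 t (u : t.-tuple L) : free u -> \det (moore_mx u) != 0.
Proof.
case: t u => [|t] u free_u; first by rewrite det_mx00 oner_neq0.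
apply/negP; rewrite -det_tr => /det0P [d d_neq0 dM].
have root_u (l : 'I_t.+1) : (linearized_poly d).[u`_l] = 0.
  have /rowP/(_ l) := dM; rewrite !mxE => Ml; rewrite -[RHS]Ml horner_sum.
  by apply: eq_bigr => k _; rewrite hornerZ hornerXn !mxE.
have roots_span : all (root (linearized_poly d)) (enum (mem <<u>>%VS)).
  apply/allP => z; rewrite mem_enum => /(horner_linearized_poly_span d) Pz.
  by rewrite /root Pz big1 // => i _; rewrite root_u scaler0.
have := max_poly_roots _ roots_span (enum_uniq _).
rewrite linearized_poly_eq0 d_neq0 -cardE card_vspace card_Fp // (eqP free_u).
move=> /(_ isT) /leq_trans /(_ (size_linearized_poly d)).
by rewrite size_tuple ltnS leqNgt ltn_exp2l ?prime_gt1 // => /negP.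
Qed.

End MooreMatrix.

Section GabidulinMap.
Variables (p : nat) (F : finFieldType) (charFp : p \in [pchar F]).
Local Notation L := (pPrimeCharType charFp).
Variables (m : nat) (G : 'M['F_p]_(m, dim L)).
Hypothesis G_free : row_free G.

(* Rows are read as elements of L: with g_i the rows of G and E_i those of E,
   the k-th row of gabidulin_mx E is sum_i g_i^(p^k) E_i. *)
Definition gabidulin_twist k (E : 'M['F_p]_(m, dim L)) : L :=
  \sum_i r2v (row i G) ^+ (p ^ k) * r2v (row i E).

Definition gabidulin_mx (E : 'M['F_p]_(m, dim L)) : 'M['F_p]_(m, dim L) :=
  \matrix_(k, j) v2r (gabidulin_twist k E) 0 j.

Fact gabidulin_mx_is_linear : linear gabidulin_mx.
Proof.
move=> a A B; apply/matrixP => k j; rewrite !mxE.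
have -> : gabidulin_twist k (a *: A + B) = a *: gabidulin_twist k A + gabidulin_twist k B.
  rewrite /gabidulin_twist scaler_sumr -big_split; apply: eq_bigr => i _ /=.
  by rewrite !linearD !linearZ /= mulrDr scalerAr.
by rewrite linearP !mxE.
Qed.

HB.instance Definition _ := GRing.isLinear.Build 'F_p _ _ _ gabidulin_mx
  gabidulin_mx_is_linear.

Lemma free_r2v_rows_mul t (P : 'M['F_p]_(t, m)) :
  row_free P -> free [tuple r2v (row l (P *m G)) | l < t].
Proof.
move=> P_free; apply/freeP => c c0 l.
suff /rowP/(_ l) : \row_l c l = 0 by rewrite !mxE.
apply/eqP; rewrite -(mulmx_free_eq0 _ P_free) -(mulmx_free_eq0 _ G_free) -mulmxA.
rewrite -(inj_eq (@r2v_inj _ L)) linear0 -c0 mulmx_sum_row linear_sum /=.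
by apply/eqP/eq_bigr => i _; rewrite nth_mktuple linearZ /= row_mul mxE.
Qed.

Lemma gabidulin_twist_mul t k (P : 'M['F_p]_(m, t)) (Q : 'M['F_p]_(t, dim L)) :
  gabidulin_twist k (P *m Q) = \sum_l r2v (row l Q) * r2v (row l (P^T *m G)) ^+ (p ^ k).
Proof.
rewrite /gabidulin_twist.
under eq_bigr do rewrite row_mul mulmx_sum_row linear_sum mulr_sumr.
rewrite exchange_big /=; apply: eq_bigr => l _.
rewrite row_mul mulmx_sum_row linear_sum frobeniusX_sum mulr_sumr.
apply: eq_bigr => i _; rewrite !linearZ /= frobeniusX_scale !mxE.
by rewrite -!scalerAr mulrC.
Qed.

(* Factor E = P Q with t = rank E rows in Q: the first t twists of E are the
   entries of the row (Q_l)_l times the Moore matrix of the free tuple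
   ((P^T G)_l)_l, which is invertible. *)
Lemma gabidulin_mx_rank_le r E : E != 0 -> (\rank E <= r)%N ->
  (pid_mx r : 'M_m) *m gabidulin_mx E != 0.
Proof.
move=> E_neq0 rankE; apply: contraNneq E_neq0 => gabE0.
set t := \rank E; set P := col_base E; set Q := row_base E.
set u := [tuple r2v (row l (P^T *m G)) | l < t].
set w := \row_l r2v (row l Q) : 'rV[L]_t.
have u_free : free u.
  by apply: free_r2v_rows_mul; rewrite /row_free mxrank_tr; exact: col_base_full.
have wM : w *m moore_mx u = 0.
  apply/rowP => k; have lt_kr : (k < r)%N by exact: leq_trans (ltn_ord k) rankE.
  have twist0 : gabidulin_twist k E = 0.
    apply: v2r_inj; apply/rowP => j; rewrite linear0 mxE.
    have /matrixP/(_ (widen_ord (rank_leq_row E) k) j) := gabE0.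
    by rewrite mul_pid_mxE lt_kr !mxE.
  rewrite [RHS]mxE -[RHS]twist0 -[in RHS](mulmx_base E) gabidulin_twist_mul mxE.
  by apply: eq_bigr => l _; rewrite !mxE nth_mktuple.
have Q0 : Q = 0.
  have w0 : w = 0.
    by rewrite -[w](mulmxK (x := moore_mx u)) ?wM ?mul0mx // unitmxE unitfE det_moore_mx_neq0.
  apply/row_matrixP => l; rewrite row0; apply: (@r2v_inj _ L); rewrite linear0.
  by have /rowP/(_ l) := w0; rewrite !mxE.
by rewrite -(mulmx_base E) -/Q Q0 mulmx0.
Qed.

End GabidulinMap.

(* Integer coefficients let a single map be reduced modulo every prime
   divisor of h at once. *)
Definition apply_intmx (R : pzRingType) m n (T : 'M[int]_(m * n)) (A : 'M[R]_(m, n)) :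
  'M[R]_(m, n) := vec_mx (mxvec A *m map_mx intr T).

Section ApplyIntmx.
Variables (R : comPzRingType) (m n : nat) (T : 'M[int]_(m * n)).

Fact apply_intmx_is_linear : linear (@apply_intmx R m n T).
Proof. by move=> a A B; rewrite /apply_intmx !linearP /= mulmxDl -scalemxAl linearP. Qed.

HB.instance Definition _ := GRing.isLinear.Build R 'M[R]_(m, n) 'M[R]_(m, n) _
  (apply_intmx T) apply_intmx_is_linear.

End ApplyIntmx.

Lemma map_apply_intmx (R S : comPzRingType) (f : {rmorphism R -> S}) m n
    (T : 'M[int]_(m * n)) (A : 'M[R]_(m, n)) :
  map_mx f (apply_intmx T A) = apply_intmx T (map_mx f A).
Proof.
rewrite /apply_intmx map_vec_mx map_mxM map_mxvec -map_mx_comp.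
by congr (vec_mx (_ *m _)); apply/matrixP => i j; rewrite !mxE /= rmorph_int.
Qed.

Lemma apply_intmx_comb (R : comPzRingType) m n (a b : int) (T1 T2 : 'M[int]_(m * n))
    (A : 'M[R]_(m, n)) :
  apply_intmx (a *: T1 + b *: T2) A = a%:~R *: apply_intmx T1 A + b%:~R *: apply_intmx T2 A.
Proof.
by rewrite /apply_intmx map_mxD !map_mxZ mulmxDr -!scalemxAr linearD !linearZ.
Qed.

Lemma apply_intmx_lin_mx p m n (psi : {linear 'M['F_p]_(m, n) -> 'M['F_p]_(m, n)}) A :
  apply_intmx (map_mx (fun x : 'F_p => (x : nat)%:Z) (lin_mx psi)) A = psi A.
Proof.
rewrite /apply_intmx -map_mx_comp [map_mx _ _](_ : _ = lin_mx psi) ?mx_vec_lin //.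
by apply/matrixP => i j; rewrite !mxE /= -pmulrn natr_Zp.
Qed.

Lemma intr_eq0_dvdz (R : pzRingType) (N : nat) :
    (forall k : nat, (k%:R == 0 :> R) = (N %| k)%N) ->
  forall z : int, (z%:~R == 0 :> R) = (N%:Z %| z)%Z.
Proof.
move=> charN [k|k]; rewrite dvdzE ?NegzE ?mulrNz ?oppr_eq0 -pmulrn charN //.
Qed.

Lemma intr_Zp_eq0 h (z : int) : (1 < h)%N -> (z%:~R == 0 :> 'Z_h) = (h%:Z %| z)%Z.
Proof. by move=> h_gt1; apply: intr_eq0_dvdz => k; rewrite -val_eqE /= val_Zp_nat. Qed.

Lemma intr_Fp_eq0 p (z : int) : prime p -> (z%:~R == 0 :> 'F_p) = (p%:Z %| z)%Z.
Proof. by move=> p_prime; apply: intr_eq0_dvdz => k; rewrite -val_eqE /= val_Fp_nat. Qed.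

Definition detects_rank_le (m n r p : nat) (T : 'M[int]_(m * n)) : Prop :=
  forall E : 'M['F_p]_(m, n), E != 0 -> (\rank E <= r)%N ->
    (pid_mx r : 'M_m) *m apply_intmx T E != 0.

Lemma detects_rank_le_exists m n r p : prime p -> (0 < n)%N -> (m <= n)%N ->
  exists T : 'M[int]_(m * n), detects_rank_le r p T.
Proof.
move=> p_prime n_gt0 le_mn.
have [F charFp cardF] := pPrimePowerField p_prime n_gt0.
have dimL : dim (pPrimeCharType charFp) = n.
  rewrite -dimvf pprimeChar_dimf.
  by rewrite [#|_|](_ : _ = #|F|) // cardF pfactorK.
move: le_mn; rewrite -dimL => le_m_dim.
have G_free : row_free (pid_mx m : 'M['F_p]_(m, dim (pPrimeCharType charFp))).
  by rewrite /row_free rank_pid_mx.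
exists (map_mx (fun x : 'F_p => (x : nat)%:Z)
  (lin_mx (gabidulin_mx (charFp := charFp) (pid_mx m)))).
by move=> E; rewrite apply_intmx_lin_mx; exact: gabidulin_mx_rank_le.
Qed.

Lemma detects_rank_le_comb m n r p (a b : int) (T1 T2 : 'M[int]_(m * n)) :
  (a%:~R : 'F_p) != 0 -> (b%:~R : 'F_p) = 0 ->
  detects_rank_le r p T1 -> detects_rank_le r p (a *: T1 + b *: T2).
Proof.
move=> a_neq0 b0 T1_detects E E_neq0 rankE.
rewrite apply_intmx_comb b0 scale0r addr0 -scalemxAr scaler_eq0 negb_or a_neq0.
exact: T1_detects.
Qed.

(* Chinese-remainder style gluing: scale the map for p by the product of the
   other primes, and the maps for the other primes by p. *)
Lemma detects_rank_le_primes m n r (s : seq nat) : (0 < n)%N -> (m <= n)%N ->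
  uniq s -> all prime s -> exists T : 'M[int]_(m * n), {in s, forall p, detects_rank_le r p T}.
Proof.
move=> n_gt0 le_mn; elim: s => [|p s IHs] /=; first by exists 0.
move=> /andP [p_notin_s uniq_s] /andP [p_prime s_prime].
have [Ts Ts_r] := IHs uniq_s s_prime.
have [Tp Tp_r] := detects_rank_le_exists r p_prime n_gt0 le_mn.
set M := (\prod_(q <- s) q)%N.
exists (M%:Z *: Tp + p%:Z *: Ts) => q; rewrite inE => /predU1P [-> | q_in_s].
  apply: detects_rank_le_comb => //; last by apply/eqP; rewrite intr_Fp_eq0.
  rewrite intr_Fp_eq0 // dvdzE /= Euclid_dvd_prod // big_has; apply/hasPn => x x_in_s.
  rewrite dvdn_prime2 //; last exact: (allP s_prime).
  by apply: contraNneq p_notin_s => ->.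
have q_prime : prime q := allP s_prime q q_in_s.
rewrite addrC; apply: detects_rank_le_comb; last exact: Ts_r.
  rewrite intr_Fp_eq0 // dvdzE /= dvdn_prime2 //; apply: contraNneq p_notin_s => qp.
  by rewrite -qp q_in_s.
by apply/eqP; rewrite intr_Fp_eq0 // dvdzE /= /M (big_rem q q_in_s) dvdn_mulr.
Qed.

Lemma inner_rank_le (R : finComUnitRingType) m n (A : 'M[R]_(m, n)) k :
  factors_through A k -> (inner_rank A <= k)%N.
Proof. by rewrite /inner_rank; case: ex_minnP => k' _; apply. Qed.

Lemma inner_rank_factors (R : finComUnitRingType) m n (A : 'M[R]_(m, n)) :
  factors_through A (inner_rank A).
Proof. by rewrite /inner_rank; case: ex_minnP. Qed.

Lemma factors_through_pid_mx (R : finComUnitRingType) m n r (A : 'M[R]_(m, n)) :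
  factors_through ((pid_mx r : 'M_m) *m A) r.
Proof.
apply/existsP; exists (pid_mx r); apply/existsP; exists (pid_mx r *m A).
by rewrite mulmxA mul_pid_mx !minnn.
Qed.

Lemma inner_rank_mulrn (R : finComUnitRingType) m n (A : 'M[R]_(m, n)) c :
  (inner_rank (A *+ c) <= inner_rank A)%N.
Proof.
apply: inner_rank_le; have /existsP [B /existsP [C /eqP AE]] := inner_rank_factors A.
by apply/existsP; exists (B *+ c); apply/existsP; exists C; rewrite -!scaler_nat -scalemxAl -AE.
Qed.

Lemma rank_le_zero_rows (F : fieldType) m n k (Y : 'M[F]_(m, n)) :
  (forall (i : 'I_m) (j : 'I_n), (k <= i)%N -> Y i j = 0) -> (\rank Y <= k)%N.
Proof.
move=> Y0; have -> : Y = (pid_mx k : 'M_m) *m Y.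
  by apply/matrixP => i j; rewrite mul_pid_mxE; case: ltnP => // /Y0->.
by rewrite (leq_trans (mxrankM_maxl _ _)) // -pid_mx_minv rank_pid_mx ?geq_minl ?geq_minr.
Qed.

Lemma int_mx_unimodular_zero_rows m k (B : 'M[int]_(m, k)) :
  exists2 U : 'M[int]_m, U \in unitmx &
    forall (i : 'I_m) (j : 'I_k), (k <= i)%N -> (U *m B) i j = 0.
Proof.
have [L L_unit [R _ [d _ ->]]] := int_Smith_normal_form B.
exists (invmx L); first by rewrite unitmx_inv.
move=> i j le_ki; rewrite !mulmxA mulVmx // mul1mx mxE big1 // => l _.
by rewrite mxE (gtn_eqF (leq_trans (ltn_ord l) le_ki)) mulr0n mul0r.
Qed.

Section ReductionModPrime.
Variables (h p : nat).
Hypotheses (h_gt1 : (1 < h)%N) (p_prime : prime p) (p_dvd_h : (p %| h)%N).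
Local Notation hp := (h %/ p)%N.

Let hp_gt0 : (0 < hp)%N.
Proof. by rewrite divn_gt0 ?prime_gt0 // dvdn_leq // ltnW. Qed.

Lemma intr_Zp_scaled_eq0 (z : int) :
  ((hp%:Z * z)%:~R == 0 :> 'Z_h) = (z%:~R == 0 :> 'F_p).
Proof.
rewrite intr_Zp_eq0 // intr_Fp_eq0 //.
have -> : h%:Z = hp%:Z * p%:Z by rewrite -PoszM divnK.
by rewrite dvdz_mul2l // eqz_nat -lt0n.
Qed.

Lemma map_mx_Zp_scaled_eq0 m n (Y : 'M[int]_(m, n)) :
  (map_mx intr (hp%:Z *: Y) == 0 :> 'M['Z_h]_(m, n)) = (map_mx intr Y == 0 :> 'M['F_p]_(m, n)).
Proof.
apply/eqP/eqP => /matrixP Y0; apply/matrixP => i j; apply/eqP; have /eqP := Y0 i j.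
  by rewrite !mxE intr_Zp_scaled_eq0.
by rewrite !mxE -intr_Zp_scaled_eq0.
Qed.

Lemma Zp_torsion_mx_lift m n (D : 'M['Z_h]_(m, n)) :
  D *+ p = 0 -> exists E : 'M[int]_(m, n), D = map_mx intr (hp%:Z *: E).
Proof.
move=> Dp0; exists (\matrix_(i, j) (D i j %/ hp)%:Z); apply/matrixP => i j.
have hp_dvd_D : (hp %| D i j)%N.
  have /matrixP/(_ i j)/(congr1 val) := Dp0.
  rewrite -scaler_nat !mxE mulr_natl Zp_mulrn /= => Dijp.
  have : (h %| D i j * p)%N by rewrite -[X in (X %| _)%N](Zp_cast h_gt1) /dvdn Dijp.
  by rewrite -{1}(divnK p_dvd_h) dvdn_pmul2r ?prime_gt0.
by rewrite !mxE -PoszM mulnC divnK // -pmulrn natr_Zp.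
Qed.

Lemma rank_Fp_le_inner_rank_Zp m n (E : 'M[int]_(m, n)) :
  (\rank (map_mx intr E : 'M['F_p]_(m, n))
     <= inner_rank (map_mx intr (hp%:Z *: E) : 'M['Z_h]_(m, n)))%N.
Proof.
set k := inner_rank _; have /existsP [B /existsP [C /eqP BC]] := inner_rank_factors
  (map_mx intr (hp%:Z *: E) : 'M['Z_h]_(m, n)).
set iB := map_mx (fun x : 'Z_h => (x : nat)%:Z) B.
have iBK : map_mx intr iB = B by apply/matrixP => i j; rewrite !mxE -pmulrn natr_Zp.
have [U U_unit UiB0] := int_mx_unimodular_zero_rows iB.
have UE0 (i : 'I_m) (j : 'I_n) : (k <= i)%N -> (map_mx intr (U *m E) : 'M['F_p]_(m, n)) i j = 0.
  move=> le_ki; have : (map_mx intr (U *m (hp%:Z *: E)) : 'M['Z_h]_(m, n)) i j = 0.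
    rewrite map_mxM BC mulmxA -iBK -map_mxM mxE big1 // => l _.
    by rewrite mxE UiB0 // mul0r.
  by rewrite -scalemxAr !mxE => /eqP; rewrite intr_Zp_scaled_eq0 => /eqP.
have -> : E = invmx U *m (U *m E) by rewrite mulmxA mulVmx ?mul1mx.
by rewrite map_mxM (leq_trans (mxrankM_maxr _ _)) // rank_le_zero_rows.
Qed.

End ReductionModPrime.

Lemma torsion_prime_multiple (V : zmodType) h (x : V) :
  (0 < h)%N -> x *+ h = 0 -> x != 0 ->
  exists p c, [/\ prime p, (p %| h)%N, x *+ c != 0 & x *+ c *+ p = 0].
Proof.
move=> h_gt0 xh0 x_neq0.
have : exists k, [&& (0 < k)%N, (k %| h)%N & x *+ k == 0].
  by exists h; rewrite h_gt0 dvdnn xh0 eqxx.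
case/ex_minnP => o /and3P [o_gt0 o_dvd_h /eqP xo0] o_min.
have o_gt1 : (1 < o)%N.
  rewrite ltn_neqAle o_gt0 andbT; apply: contraNneq x_neq0 => o1.
  by rewrite -[x]mulr1n o1 xo0.
set p := pdiv o; have p_prime : prime p := pdiv_prime o_gt1.
have p_dvd_o : (p %| o)%N := pdiv_dvd o.
exists p, (o %/ p)%N; split.
- exact: p_prime.
- exact: dvdn_trans p_dvd_o o_dvd_h.
- apply: contraTneq (ltn_Pdiv (prime_gt1 p_prime) o_gt0) => xc0; rewrite -leqNgt.
  apply: o_min; rewrite xc0 eqxx andbT divn_gt0 ?prime_gt0 // dvdn_leq //=.
  exact: dvdn_trans (dvdn_div p_dvd_o) o_dvd_h.
- by rewrite -mulrnA divnK.
Qed.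

Lemma apply_intmx_Zp_neq0 h m n r (T : 'M[int]_(m * n)) : (1 < h)%N ->
    {in primes h, forall p, detects_rank_le r p T} ->
  forall D : 'M['Z_h]_(m, n), D != 0 -> (inner_rank D <= r)%N ->
    (pid_mx r : 'M_m) *m apply_intmx T D != 0.
Proof.
move=> h_gt1 T_detects D D_neq0 rankD.
have Dh0 : D *+ h = 0 by rewrite -scaler_nat pchar_Zp // scale0r.
have [p [c [p_prime p_dvd_h Dc_neq0 Dcp0]]] :=
  torsion_prime_multiple (ltnW h_gt1) Dh0 D_neq0.
have [E DcE] := Zp_torsion_mx_lift h_gt1 p_prime p_dvd_h Dcp0.
have E_neq0 : map_mx intr E != 0 :> 'M['F_p]_(m, n).
  by rewrite -(map_mx_Zp_scaled_eq0 h_gt1 p_prime p_dvd_h) -DcE.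
have rankE : (\rank (map_mx intr E : 'M['F_p]_(m, n)) <= r)%N.
  rewrite (leq_trans (rank_Fp_le_inner_rank_Zp h_gt1 p_prime p_dvd_h E)) // -DcE.
  exact: leq_trans (inner_rank_mulrn _ _) rankD.
have p_in_h : p \in primes h by rewrite mem_primes p_prime ltnW.
have pid_apply_map (R : comNzRingType) (f : {rmorphism int -> R}) Y :
    map_mx f ((pid_mx r : 'M_m) *m apply_intmx T Y) = pid_mx r *m apply_intmx T (map_mx f Y).
  by rewrite map_mxM map_pid_mx map_apply_intmx.
have lift_E : map_mx intr ((h %/ p)%N%:Z *: ((pid_mx r : 'M_m) *m apply_intmx T E))
    = ((pid_mx r : 'M_m) *m apply_intmx T D) *+ c :> 'M['Z_h]_(m, n).
  rewrite scalemxAr -linearZ pid_apply_map -DcE linearMn.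
  by rewrite -scaler_nat -scalemxAr scaler_nat.
apply: contra (T_detects p p_in_h _ E_neq0 rankE) => /eqP TD0.
by rewrite -pid_apply_map -(map_mx_Zp_scaled_eq0 h_gt1 p_prime p_dvd_h) lift_E TD0 mul0rn.
Qed.

Lemma complete_is_core (T : finType) (e : rel T) : (forall x y, e x y = (x != y)) -> is_core e.
Proof.
move=> eE f f_hom; have f_inj : injective f.
  move=> x y fxy; apply/eqP; apply: contraT => xy.
  by have := f_hom x y; rewrite !eE xy fxy eqxx => /(_ isT).
by split=> [|x y]; [exact: injF_bij | rewrite !eE (inj_eq f_inj)].
Qed.

Section CoresAndColourings.
Variables (T : finType) (e : rel T) (S : {set T}) (f : T -> T).
Hypotheses (S_clique : clique e S) (f_in_S : forall x, f x \in S).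
Hypothesis f_proper : forall x y, e x y -> f x != f y.

Lemma colouring_clique_card (S' : {set T}) : clique e S' -> (#|S'| <= #|S|)%N.
Proof.
move=> S'_clique; have f_inj : {in S' &, injective f}.
  move=> x y xS' yS' fxy; apply/eqP; apply: contraT => xy.
  by have := f_proper (S'_clique x y xS' yS' xy); rewrite fxy eqxx.
rewrite -(card_in_imset f_inj); apply/subset_leq_card/subsetP => _ /imsetP [x _ ->].
exact: f_in_S.
Qed.

Lemma colouring_core_of : is_core_of e S (fun x y => x != y).
Proof.
split; first exact: S_clique.
split; first by apply: complete_is_core => x y; rewrite /subgraph_rel (inj_eq val_inj).
by exists (fun x => exist _ (f x) (f_in_S x)) => x y /f_proper.
Qed.

Lemma colouring_not_core : (#|S| < #|T|)%N -> ~ is_core e.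
Proof.
move=> S_small e_core; have f_hom : ghom e e f.
  by move=> x y /f_proper; apply: S_clique.
have [[g fK _] _] := e_core f f_hom.
have : f @: [set: T] \subset S by apply/subsetP => _ /imsetP [x _ ->].
move=> /subset_leq_card; rewrite card_imset ?cardsT; last exact: can_inj fK.
by rewrite leqNgt S_small.
Qed.

End CoresAndColourings.

Definition top_supported h m n r : {set 'M['Z_h]_(m, n)} :=
  [set A | (pid_mx r : 'M_m) *m A == A].

Lemma top_supported_clique h m n r : clique (Bil_adj h m n r) (top_supported h m n r).
Proof.
move=> A B; rewrite !inE => /eqP A_top /eqP B_top AB; rewrite /Bil_adj AB.
by apply: inner_rank_le; rewrite -A_top -B_top -mulmxBr factors_through_pid_mx.
Qed.

Lemma card_top_supported h m n r : (1 < h)%N -> (r <= m)%N ->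
  #|top_supported h m n r| = (h ^ (n * r))%N.
Proof.
move=> h_gt1 le_rm; pose embed (X : 'M['Z_h]_(r, n)) := (pid_mx r : 'M_(m, r)) *m X.
have embedK : cancel embed (mulmx (pid_mx r : 'M_(r, m))).
  by move=> X; rewrite mulmxA mul_pid_mx !minnn (minn_idPr le_rm) pid_mx_1 mul1mx.
have -> : top_supported h m n r = embed @: [set: 'M_(r, n)].
  apply/setP => A; rewrite inE; apply/eqP/imsetP => [A_top | [X _ ->]].
    by exists (pid_mx r *m A); rewrite // /embed mulmxA mul_pid_mx !minnn.
  by rewrite /embed mulmxA mul_pid_mx !minnn (minn_idPr le_rm).
by rewrite card_imset ?cardsT ?card_mx ?card_ord ?Zp_cast 1?mulnC //; exact: can_inj embedK.
Qed.

Lemma Bil_adj_complete h m n (A B : 'M['Z_h]_(m, n)) : Bil_adj h m n m A B = (A != B).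
Proof.
rewrite /Bil_adj andb_idr // => _; apply: inner_rank_le.
by rewrite -[A - B]mul1mx -pid_mx_1 factors_through_pid_mx.
Qed.

Lemma Bil_adj_colouring h m n r : (1 < h)%N -> (0 < n)%N -> (m <= n)%N ->
  exists2 col : 'M['Z_h]_(m, n) -> 'M['Z_h]_(m, n),
    forall A, col A \in top_supported h m n r &
    forall A B, Bil_adj h m n r A B -> col A != col B.
Proof.
move=> h_gt1 n_gt0 le_mn.
have [T T_detects] := detects_rank_le_primes r n_gt0 le_mn (primes_uniq h) (all_prime_primes h).
exists (fun A => (pid_mx r : 'M_m) *m apply_intmx T A) => [A | A B /andP [AB rankAB]].
  by rewrite inE mulmxA mul_pid_mx minnn pid_mx_minv.
by rewrite -subr_eq0 -mulmxBr -linearB apply_intmx_Zp_neq0 ?subr_eq0.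
Qed.

Theorem corollary3p10 (h m n r : nat) :
  (1 < h)%N -> (1 <= r)%N -> (r <= m)%N -> (m <= n)%N ->
  (exists (S : {set 'M['Z_h]_(m, n)}) (eD : rel 'M['Z_h]_(m, n)),
      is_core_of (Bil_adj h m n r) S eD /\
      (forall x y, x \in S -> y \in S -> eD x y = (x != y)) /\
      #|S| = (h ^ (n * r))%N /\
      max_clique (Bil_adj h m n r) S) /\
  (is_core (Bil_adj h m n r) <-> r = m).
Proof.
move=> h_gt1 r_gt0 le_rm le_mn.
have n_gt0 : (0 < n)%N by rewrite (leq_trans r_gt0) // (leq_trans le_rm).
have S_clique := @top_supported_clique h m n r.
have [col col_in col_proper] := Bil_adj_colouring r h_gt1 n_gt0 le_mn.
split.
  exists (top_supported h m n r), (fun x y => x != y); split; last split => //.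
    exact: colouring_core_of S_clique col_in col_proper.
  split; first exact: card_top_supported.
  by split => // S'; apply: colouring_clique_card col_in col_proper S'.
split => [Bil_core | r_eq_m]; last first.
  by rewrite r_eq_m; apply: complete_is_core; exact: Bil_adj_complete.
apply/eqP; rewrite eqn_leq le_rm leqNgt; apply/negP => lt_rm.
apply: colouring_not_core S_clique col_in col_proper _ Bil_core.
rewrite card_top_supported // cardT -cardE card_mx card_ord Zp_cast //.
by rewrite ltn_exp2l // [X in (_ < X)%N]mulnC ltn_pmul2l.
Qed.
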